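(* Let $W\in\mathbb{R}^{n\times n}$ be a symmetric positive definite matrix, $T\in\mathbb{R}^{n\times n}$ a symmetric positive semi-definite matrix, and suppose $A=W+iT\in\mathbb{C}^{n\times n}$ (with $i=\sqrt{-1}$) is non-singular. Let $b\in\mathbb{C}^n$, $\alpha>0$ and $0\le\omega<2$. Consider the GADI iteration: starting from an initial vector $x^{(0)}\in\mathbb{C}^n$, for $k=0,1,2,\dots$, $$(\alpha I+W)x^{(k+\frac12)} = (\alpha I - iT)x^{(k)} + b,$$ $$(\alpha I + iT)x^{(k+1)} = \big(iT - (1-\omega)\alpha I\big)x^{(k)} + (2-\omega)\alpha\, x^{(k+\frac12)}.$$ Then the sequence $\{x^{(k)}\}$ converges to the unique exact solution $x\in\mathbb{C}^n$ of $Ax=b$. *)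

From HB Require Import structures.
From mathcomp Require Import all_boot all_order all_algebra.
From mathcomp Require Import complex.
From mathcomp Require Import all_classical all_reals all_analysis.
Set Implicit Arguments. Unset Strict Implicit. Unset Printing Implicit Defensive.
Import Order.TTheory GRing.Theory Num.Theory.
Import numFieldNormedType.Exports.
Local Open Scope ring_scope.
Local Open Scope classical_set_scope.

Definition sym_posdef (R : realType) (n : nat) (M : 'M[R]_n) : Prop :=
  M^T = M /\ forall v : 'cV[R]_n, v != 0 -> 0 < (v^T *m M *m v) 0 0.

Definition sym_possemidef (R : realType) (n : nat) (M : 'M[R]_n) : Prop :=
  M^T = M /\ forall v : 'cV[R]_n, 0 <= (v^T *m M *m v) 0 0.

Definition cmx (R : realType) (m n : nat) (M : 'M[R]_(m, n)) : 'M[R[i]]_(m, n) :=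
  map_mx (fun r : R => (r%:C)%C) M.

(* convergence of a sequence of complex vectors (entrywise, in real and imaginary parts;
   equivalent to convergence in any norm on C^n) *)
Definition cvg_cvec (R : realType) (n : nat) (x : nat -> 'cV[R[i]]_n) (l : 'cV[R[i]]_n) : Prop :=
  forall j : 'I_n,
    ((fun k => complex.Re (x k j 0)) @ \oo --> complex.Re (l j 0))%classic /\
    ((fun k => complex.Im (x k j 0)) @ \oo --> complex.Im (l j 0))%classic.

From HB Require Import structures.
From mathcomp Require Import all_boot all_order all_algebra.
From mathcomp Require Import complex.
From mathcomp Require Import all_classical all_reals all_analysis.
From mathcomp Require Import ring lra.
Set Implicit Arguments. Unset Strict Implicit. Unset Printing Implicit Defensive.
Import Order.TTheory GRing.Theory Num.Theory.
Import numFieldNormedType.Exports.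
Local Open Scope ring_scope.
Local Open Scope classical_set_scope.

(* Splitting vectors into real and imaginary parts turns A = W + iT into the
   real matrix [[W, -T], [T, W]] = W' + K, with W' = diag(W, W) symmetric
   positive definite and K = [[0, -T], [T, 0]] skew-symmetric (only the
   symmetry of T matters), and the GADI iteration into the same iteration
   for W' + K.  For the error e_k and the half-step error h_k, the energy
   |(aI + K) e_k|^2 = |(aI - K) e_k|^2 drops by at least 2 (2 - w) a <h_k, W' h_k>
   at each step: twice the new energy is the squared norm of the combination
   w (aI + K) e_k + (2 - w) (aI - W') h_k, and
   |(aI - W') h|^2 = |(aI + W') h|^2 - 4 a <h, W' h>.  Hence <h_k, W' h_k> -> 0,
   so h_k -> 0, so (aI - K) e_k = (aI + W') h_k -> 0, and
   a^2 |e_k|^2 <= |(aI - K) e_k|^2 gives e_k -> 0. *)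

Section DotProduct.
Variables (R : realFieldType) (m : nat).
Implicit Types (u v w : 'cV[R]_m) (M : 'M[R]_m).

Definition dot u v : R := \sum_j u j 0 * v j 0.

Lemma dotC u v : dot u v = dot v u.
Proof. by apply: eq_bigr => j _; rewrite mulrC. Qed.

Lemma dotDl u v w : dot (u + v) w = dot u w + dot v w.
Proof. by rewrite /dot -big_split; apply: eq_bigr => j _; rewrite mxE mulrDl. Qed.

Lemma dotNl u w : dot (- u) w = - dot u w.
Proof. by rewrite /dot -sumrN; apply: eq_bigr => j _; rewrite mxE mulNr. Qed.

Lemma dotZl a u w : dot (a *: u) w = a * dot u w.
Proof. by rewrite /dot mulr_sumr; apply: eq_bigr => j _; rewrite mxE mulrA. Qed.

Lemma dotBl u v w : dot (u - v) w = dot u w - dot v w.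
Proof. by rewrite dotDl dotNl. Qed.

Lemma dotDr u v w : dot w (u + v) = dot w u + dot w v.
Proof. by rewrite !(dotC w) dotDl. Qed.

Lemma dotNr u w : dot w (- u) = - dot w u.
Proof. by rewrite !(dotC w) dotNl. Qed.

Lemma dotZr a u w : dot w (a *: u) = a * dot w u.
Proof. by rewrite !(dotC w) dotZl. Qed.

Lemma dotBr u v w : dot w (u - v) = dot w u - dot w v.
Proof. by rewrite !(dotC w) dotBl. Qed.

Lemma dot0l w : dot 0 w = 0.
Proof. by rewrite -(scale0r 0) dotZl mul0r. Qed.

Lemma dot_ge0 u : 0 <= dot u u.
Proof. by apply: sumr_ge0 => j _; rewrite -expr2 sqr_ge0. Qed.

Lemma sqr_entry_le_dot u j : u j 0 ^+ 2 <= dot u u.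
Proof.
rewrite /dot (bigD1 j) //= -expr2 lerDl.
by apply: sumr_ge0 => i _; rewrite -expr2 sqr_ge0.
Qed.

Lemma dot_delta_mx j u : dot (delta_mx j 0) u = u j 0.
Proof.
rewrite /dot (bigD1 j) //= big1 => [|i /negbTE neq_ij]; last by rewrite !mxE neq_ij mul0r.
by rewrite !mxE !eqxx mul1r addr0.
Qed.

Lemma dot_mulmx M u v : dot u (M *m v) = dot (M^T *m u) v.
Proof.
rewrite /dot; under eq_bigr => i _ do rewrite mxE big_distrr /=.
under [RHS]eq_bigr => j _ do rewrite mxE big_distrl /=.
rewrite exchange_big /=; apply: eq_bigr => j _; apply: eq_bigr => i _.
by rewrite mxE; ring.
Qed.

Lemma trmx_mulmx_dot M u : (u^T *m M *m u) 0 0 = dot u (M *m u).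
Proof. by rewrite -mulmxA mxE; apply: eq_bigr => j _; rewrite mxE. Qed.

Lemma dot_skew M u : M^T = - M -> dot u (M *m u) = 0.
Proof.
move=> skewM; have := dot_mulmx M u u.
rewrite skewM mulNmx dotNl (dotC (M *m u)); lra.
Qed.

Lemma dot_comb_le u v (s t : R) : 0 <= s -> 0 <= t ->
  dot (s *: u + t *: v) (s *: u + t *: v) <= (s + t) * (s * dot u u + t * dot v v).
Proof.
move=> s_ge0 t_ge0; have := mulr_ge0 (mulr_ge0 s_ge0 t_ge0) (dot_ge0 (u - v)).
rewrite !(dotDl, dotDr, dotBl, dotBr, dotNl, dotNr, dotZl, dotZr) (dotC v u); nra.
Qed.

Lemma skew_dot_addmx (a : R) M u : M^T = - M ->
  dot ((a%:M + M) *m u) ((a%:M + M) *m u) = a ^+ 2 * dot u u + dot (M *m u) (M *m u).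
Proof.
move=> skewM; rewrite mulmxDl mul_scalar_mx.
rewrite !(dotDl, dotDr, dotZl, dotZr) (dotC (M *m u) u) dot_skew //; ring.
Qed.

Lemma skew_dot_submx (a : R) M u : M^T = - M ->
  dot ((a%:M - M) *m u) ((a%:M - M) *m u) = a ^+ 2 * dot u u + dot (M *m u) (M *m u).
Proof.
move=> skewM; rewrite skew_dot_addmx ?mulNmx ?dotNl ?dotNr ?opprK //.
by rewrite raddfN /= skewM opprK.
Qed.

Lemma dot_submx_addmx (a : R) M u :
  dot ((a%:M - M) *m u) ((a%:M - M) *m u) + 4 * a * dot u (M *m u) =
  dot ((a%:M + M) *m u) ((a%:M + M) *m u).
Proof.
rewrite mulmxBl mulmxDl mul_scalar_mx.
rewrite !(dotDl, dotDr, dotBl, dotBr, dotNl, dotNr, dotZl, dotZr) (dotC (M *m u) u); ring.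
Qed.

End DotProduct.

Lemma gadi_energy_decrease (R : realFieldType) (m : nat) (W K : 'M[R]_m) (a w : R)
    (e h e' : 'cV[R]_m) :
  K^T = - K -> 0 <= w <= 2 ->
  (a%:M + W) *m h = (a%:M - K) *m e ->
  (a%:M + K) *m e' = (K - ((1 - w) * a)%:M) *m e + ((2 - w) * a) *: h ->
  dot ((a%:M + K) *m e') ((a%:M + K) *m e') <=
  dot ((a%:M + K) *m e) ((a%:M + K) *m e) - 2 * (2 - w) * a * dot h (W *m h).
Proof.
move=> skewK /andP[w_ge0 w_le2] half full.
have split_step : 2 *: ((a%:M + K) *m e') =
    w *: ((a%:M + K) *m e) + (2 - w) *: ((a%:M - W) *m h).
  have Wh : W *m h = a *: e - K *m e - a *: h.
    by rewrite -(mul_scalar_mx a e) -mulmxBl -half mulmxDl mul_scalar_mx addrAC subrr add0r.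
  rewrite full mulmxBl mulmxBl mulmxDl !mul_scalar_mx Wh.
  by apply/matrixP => i j; rewrite !mxE; ring.
have sub_energy : dot ((a%:M - W) *m h) ((a%:M - W) *m h) =
    dot ((a%:M + K) *m e) ((a%:M + K) *m e) - 4 * a * dot h (W *m h).
  have := dot_submx_addmx a W h.
  by rewrite half (skew_dot_submx a e skewK) -(skew_dot_addmx a e skewK) => <-; ring.
have w2_ge0 : 0 <= 2 - w by rewrite subr_ge0.
have := dot_comb_le ((a%:M + K) *m e) ((a%:M - W) *m h) w_ge0 w2_ge0.
rewrite -split_step dotZl dotZr sub_energy.
set E' := dot _ _; set E := dot ((a%:M + K) *m e) _; set P := dot h _.
suff -> : (w + (2 - w)) * (w * E + (2 - w) * (E - 4 * a * P)) =
          2 * (2 * (E - 2 * (2 - w) * a * P)) by lra.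
ring.
Qed.

Section Convergence.
Variable R : realType.

Lemma squeeze_cvg0 (u v : nat -> R) :
  (forall k, 0 <= u k <= v k) -> v @ \oo --> 0 -> u @ \oo --> 0.
Proof. by move=> uv; apply: (squeeze_cvgr (f := fun=> 0)) (cvg_cst _); apply: nearW. Qed.

Lemma sqr_cvg0 (u : nat -> R) : (fun k => u k ^+ 2) @ \oo --> 0 -> u @ \oo --> 0.
Proof.
move=> u2_0; have : (Num.sqrt \o (fun k => u k ^+ 2)) @ \oo --> Num.sqrt 0.
  by apply: continuous_cvg => //; exact: sqrt_continuous.
rewrite sqrtr0 => sqrt_cvg0; apply: norm_cvg0; apply: cvg_trans sqrt_cvg0.
by apply: near_eq_cvg; apply: nearW => k /=; rewrite sqrtr_sqr.
Qed.

Lemma cvg0_mull (c : R) (u : nat -> R) :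
  u @ \oo --> 0 -> (fun k => c * u k) @ \oo --> 0.
Proof. by move=> u0; have := @cvgMl_tmp _ _ _ _ _ c _ u0; rewrite mulr0; exact. Qed.

Lemma descent_cvg0 (S P : nat -> R) (c : R) : 0 < c ->
  (forall k, 0 <= S k) -> (forall k, 0 <= P k) ->
  (forall k, S k.+1 <= S k - c * P k) -> P @ \oo --> 0.
Proof.
move=> c_gt0 S_ge0 P_ge0 descent.
have S_noninc : nonincreasing_seq S.
  apply/nonincreasing_seqP => k; have := descent k.
  have := mulr_ge0 (ltW c_gt0) (P_ge0 k); lra.
have S_lb : has_lbound (range S) by exists 0 => _ [k _ <-].
have S_cvg := nonincreasing_cvgn S_noninc S_lb.
have S1_cvg : (fun k => S k.+1) @ \oo --> inf (S @` setT).
  by rewrite -[X in X @ _ --> _]/([sequence S n.+1]_n) cvg_shiftS.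
have gap_cvg : (fun k => c^-1 * (S k - S k.+1)) @ \oo --> 0.
  by apply: cvg0_mull; have := cvgB S_cvg S1_cvg; rewrite subrr; exact.
apply: (squeeze_cvg0 _ gap_cvg) => k; rewrite P_ge0 /= mulrC ler_pdivlMr // mulrC.
by have := descent k; lra.
Qed.

Definition entrywise_cvg0 m (u : nat -> 'cV[R]_m) :=
  forall j, (fun k => u k j 0) @ \oo --> 0.

Lemma cvg0_sum (I : Type) (r : seq I) (F : I -> nat -> R) :
  (forall i, F i @ \oo --> 0) -> (fun k => \sum_(i <- r) F i k) @ \oo --> 0.
Proof.
move=> F0; have sum0 : \sum_(i <- r) (0 : R) = 0 by rewrite big1.
rewrite -[X in _ --> X]sum0; apply: cvg_big => //; exact: add_continuous.
Qed.

Lemma entrywise_cvg0_mulmx m p (M : 'M[R]_(p, m)) (u : nat -> 'cV[R]_m) :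
  entrywise_cvg0 u -> entrywise_cvg0 (fun k => M *m u k).
Proof.
move=> u0 i; under eq_fun do rewrite mxE.
by apply: cvg0_sum => j; apply: cvg0_mull.
Qed.

Lemma entrywise_cvg0P m (u : nat -> 'cV[R]_m) :
  entrywise_cvg0 u <-> (fun k => dot (u k) (u k)) @ \oo --> 0.
Proof.
split=> [u0 | dot0 j].
  by apply: cvg0_sum => j; have := cvgM (u0 j) (u0 j); rewrite mulr0; exact.
apply: sqr_cvg0; apply: (squeeze_cvg0 _ dot0) => k.
by rewrite sqr_ge0 sqr_entry_le_dot.
Qed.

End Convergence.

Section PositiveDefinite.
Variables (R : realType) (m : nat) (W : 'M[R]_m).
Hypothesis posW : sym_posdef W.

Lemma posdef_dot_gt0 v : v != 0 -> 0 < dot v (W *m v).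
Proof. by rewrite -trmx_mulmx_dot; exact: posW.2. Qed.

Lemma posdef_dot_ge0 v : 0 <= dot v (W *m v).
Proof.
have [->|/posdef_dot_gt0/ltW //] := eqVneq v 0.
by rewrite dot0l.
Qed.

Lemma posdef_cauchy_schwarz u v :
  dot u (W *m v) ^+ 2 <= dot u (W *m u) * dot v (W *m v).
Proof.
have [->|u_neq0] := eqVneq u 0; first by rewrite !dot0l expr0n mul0r.
have Pu_gt0 := posdef_dot_gt0 u_neq0.
set Pu := dot u (W *m u); set Pv := dot v (W *m v); set B := dot u (W *m v).
have := posdef_dot_ge0 (v - (B / Pu) *: u).
rewrite mulmxBr -scalemxAr !(dotBl, dotBr, dotZl, dotZr) -/Pu -/Pv -/B.
rewrite dot_mulmx posW.1 (dotC (W *m v)) -/B divfK ?gt_eqF // subrr mulr0 subr0.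
move=> /(mulr_ge0 (ltW Pu_gt0)).
suff -> : Pu * (Pv - B / Pu * B) = Pu * Pv - B ^+ 2 by rewrite subr_ge0.
by field; rewrite gt_eqF.
Qed.

Lemma posdef_unitmx : W \in unitmx.
Proof.
rewrite unitmxE unitfE; apply/negP => /det0P[v v_neq0 vW0].
have := posW.2 v^T; rewrite trmx_eq0 trmxK vW0 mul0mx mxE ltxx.
by move/(_ v_neq0).
Qed.

Lemma posdef_entrywise_cvg0 (p : nat -> 'cV[R]_m) :
  (fun k => dot (p k) (W *m p k)) @ \oo --> 0 -> entrywise_cvg0 p.
Proof.
move=> energy0.
have Wp0 : entrywise_cvg0 (fun k => W *m p k).
  move=> j /=; apply: sqr_cvg0.
  apply: (squeeze_cvg0 _ (cvg0_mull (dot (delta_mx j 0) (W *m delta_mx j 0)) energy0)) => k.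
  by rewrite sqr_ge0 -(dot_delta_mx j (W *m p k)) posdef_cauchy_schwarz.
have Winv_Wp : (fun k => invmx W *m (W *m p k)) = p.
  by apply/funext => k; rewrite mulKmx // posdef_unitmx.
by rewrite -Winv_Wp; apply: entrywise_cvg0_mulmx.
Qed.

End PositiveDefinite.

Lemma dot_col_mx (R : realFieldType) (m1 m2 : nat) (u1 v1 : 'cV[R]_m1) (u2 v2 : 'cV[R]_m2) :
  dot (col_mx u1 u2) (col_mx v1 v2) = dot u1 v1 + dot u2 v2.
Proof.
rewrite /dot big_split_ord /=.
by congr (_ + _); apply: eq_bigr => j _; rewrite ?col_mxEu ?col_mxEd.
Qed.

Lemma sym_posdef_block_diag (R : realType) (m : nat) (W : 'M[R]_m) :
  sym_posdef W -> sym_posdef (block_mx W 0 0 W).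
Proof.
move=> posW; split; first by rewrite tr_block_mx posW.1 !trmx0.
move=> v v_neq0; rewrite trmx_mulmx_dot -[v]vsubmxK mul_block_col.
rewrite !mul0mx addr0 add0r dot_col_mx.
have [u0 | /(posdef_dot_gt0 posW) u_gt0] := eqVneq (usubmx v) 0.
  have d_neq0 : dsubmx v != 0.
    by apply: contraNneq v_neq0 => d0; rewrite -[v]vsubmxK u0 d0 col_mx0.
  by rewrite ltr_wpDl ?posdef_dot_ge0 ?posdef_dot_gt0.
by rewrite ltr_wpDr ?posdef_dot_ge0.
Qed.

Lemma skew_block_mx (R : realType) (m : nat) (T : 'M[R]_m) :
  T^T = T -> (block_mx 0 (- T) T 0)^T = - block_mx 0 (- T) T 0.
Proof.
by move=> symT; rewrite tr_block_mx opp_block_mx !trmx0 raddfN /= symT !oppr0 opprK.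
Qed.

Section RealGADI.
Variables (R : realType) (m : nat) (W K : 'M[R]_m) (a w : R).
Hypotheses (posW : sym_posdef W) (skewK : K^T = - K).
Hypotheses (a_gt0 : 0 < a) (w_ge0 : 0 <= w) (w_lt2 : w < 2).

Lemma gadi_error_cvg0 (e h : nat -> 'cV[R]_m) :
  (forall k, (a%:M + W) *m h k = (a%:M - K) *m e k) ->
  (forall k, (a%:M + K) *m e k.+1 =
     (K - ((1 - w) * a)%:M) *m e k + ((2 - w) * a) *: h k) ->
  entrywise_cvg0 e.
Proof.
move=> half full.
pose S k := dot ((a%:M + K) *m e k) ((a%:M + K) *m e k).
pose P k := dot (h k) (W *m h k).
have descent k : S k.+1 <= S k - 2 * (2 - w) * a * P k.
  by apply: gadi_energy_decrease; rewrite ?w_ge0 ?ltW.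
have energy0 : P @ \oo --> 0.
  apply: (@descent_cvg0 _ S P (2 * (2 - w) * a)) => // [|k|k].
  - by rewrite !mulr_gt0 // subr_gt0.
  - exact: dot_ge0.
  - exact: posdef_dot_ge0.
have h0 : entrywise_cvg0 h := posdef_entrywise_cvg0 posW energy0.
have /entrywise_cvg0P Ke0 : entrywise_cvg0 (fun k => (a%:M - K) *m e k).
  by rewrite -(funext half); exact: entrywise_cvg0_mulmx.
apply/entrywise_cvg0P; apply: (squeeze_cvg0 _ (cvg0_mull (a ^- 2) Ke0)) => k.
rewrite dot_ge0 /= (skew_dot_submx a (e k) skewK) mulrDr mulrA mulVf ?expf_neq0 ?gt_eqF //.
by rewrite mul1r lerDl mulr_ge0 ?dot_ge0 // invr_ge0 exprn_ge0 // ltW.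
Qed.

Theorem gadi_cvg (b xs : 'cV[R]_m) (x xh : nat -> 'cV[R]_m) :
  (W + K) *m xs = b ->
  (forall k, (a%:M + W) *m xh k = (a%:M - K) *m x k + b) ->
  (forall k, (a%:M + K) *m x k.+1 =
     (K - ((1 - w) * a)%:M) *m x k + ((2 - w) * a) *: xh k) ->
  entrywise_cvg0 (fun k => x k - xs).
Proof.
move=> sol half full; apply: (@gadi_error_cvg0 _ (fun k => xh k - xs)) => k.
  have fixed_half : (a%:M + W) *m xs = (a%:M - K) *m xs + b.
    by rewrite -sol -mulmxDl addrCA subrK addrC.
  by rewrite mulmxBr half fixed_half opprD addrACA subrr addr0 -mulmxBr.
have fixed_full : (a%:M + K) *m xs = (K - ((1 - w) * a)%:M) *m xs + ((2 - w) * a) *: xs.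
  rewrite -mul_scalar_mx -mulmxDl -addrA -raddfN -raddfD /= addrC.
  by congr ((_%:M + _) *m _); ring.
by rewrite mulmxBr full fixed_full opprD addrACA -mulmxBr -scalerBr.
Qed.

End RealGADI.

Section Realification.
Variable R : realType.
Local Notation C := R[i].
Implicit Types c : R.

Definition Remx m p (A : 'M[C]_(m, p)) : 'M[R]_(m, p) := map_mx (@complex.Re R) A.
Definition Immx m p (A : 'M[C]_(m, p)) : 'M[R]_(m, p) := map_mx (@complex.Im R) A.

Definition realmx m p (A : 'M[C]_(m, p)) : 'M[R]_(m + m, p + p) :=
  block_mx (Remx A) (- Immx A) (Immx A) (Remx A).

Definition realcv m (v : 'cV[C]_m) : 'cV[R]_(m + m) := col_mx (Remx v) (Immx v).

Lemma RemxD m p (A B : 'M[C]_(m, p)) : Remx (A + B) = Remx A + Remx B.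
Proof. exact: map_mxD. Qed.

Lemma ImmxD m p (A B : 'M[C]_(m, p)) : Immx (A + B) = Immx A + Immx B.
Proof. exact: map_mxD. Qed.

Lemma RemxN m p (A : 'M[C]_(m, p)) : Remx (- A) = - Remx A.
Proof. exact: map_mxN. Qed.

Lemma ImmxN m p (A : 'M[C]_(m, p)) : Immx (- A) = - Immx A.
Proof. exact: map_mxN. Qed.

Lemma RemxZ c m p (A : 'M[C]_(m, p)) : Remx (c%:C%C *: A) = c *: Remx A.
Proof. by apply/matrixP => i j; rewrite !mxE; case: (A i j) => x y /=; ring. Qed.

Lemma ImmxZ c m p (A : 'M[C]_(m, p)) : Immx (c%:C%C *: A) = c *: Immx A.
Proof. by apply/matrixP => i j; rewrite !mxE; case: (A i j) => x y /=; ring. Qed.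

Lemma Remx_mul m n p (A : 'M[C]_(m, n)) (B : 'M[C]_(n, p)) :
  Remx (A *m B) = Remx A *m Remx B - Immx A *m Immx B.
Proof.
apply/matrixP => i j; rewrite !mxE raddf_sum -sumrB; apply: eq_bigr => k _.
by rewrite !mxE; case: (A i k) => x y; case: (B k j).
Qed.

Lemma Immx_mul m n p (A : 'M[C]_(m, n)) (B : 'M[C]_(n, p)) :
  Immx (A *m B) = Remx A *m Immx B + Immx A *m Remx B.
Proof.
apply/matrixP => i j; rewrite !mxE raddf_sum -big_split; apply: eq_bigr => k _.
by rewrite !mxE; case: (A i k) => x y; case: (B k j) => u v /=; ring.
Qed.

Lemma realmxD m p (A B : 'M[C]_(m, p)) : realmx (A + B) = realmx A + realmx B.
Proof. by rewrite /realmx add_block_mx RemxD ImmxD opprD. Qed.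

Lemma realmxN m p (A : 'M[C]_(m, p)) : realmx (- A) = - realmx A.
Proof. by rewrite /realmx opp_block_mx RemxN ImmxN. Qed.

Lemma realmxB m p (A B : 'M[C]_(m, p)) : realmx (A - B) = realmx A - realmx B.
Proof. by rewrite realmxD realmxN. Qed.

Lemma realcvD m (u v : 'cV[C]_m) : realcv (u + v) = realcv u + realcv v.
Proof. by rewrite /realcv add_col_mx RemxD ImmxD. Qed.

Lemma realcvZ c m (v : 'cV[C]_m) : realcv (c%:C%C *: v) = c *: realcv v.
Proof. by rewrite /realcv scale_col_mx RemxZ ImmxZ. Qed.

Lemma realcv_mul m p (A : 'M[C]_(m, p)) (v : 'cV[C]_p) :
  realcv (A *m v) = realmx A *m realcv v.
Proof.
by rewrite /realcv mul_block_col Remx_mul Immx_mul mulNmx (addrC (Immx A *m _)).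
Qed.

Lemma realmx_scalar c m : realmx ((c%:C)%C%:M : 'M[C]_m) = c%:M.
Proof.
rewrite /realmx; have -> : Remx ((c%:C)%C%:M : 'M[C]_m) = c%:M.
  by apply/matrixP => i j; rewrite !mxE; case: (i == j); rewrite ?mulr1n ?mulr0n.
have -> : Immx ((c%:C)%C%:M : 'M[C]_m) = 0.
  by apply/matrixP => i j; rewrite !mxE; case: (i == j); rewrite ?mulr1n ?mulr0n.
by rewrite oppr0 -scalar_mx_block.
Qed.

Lemma realmx_cmx m (M : 'M[R]_m) : realmx (cmx M) = block_mx M 0 0 M.
Proof.
rewrite /realmx; have -> : Remx (cmx M) = M by apply/matrixP => i j; rewrite !mxE.
have -> : Immx (cmx M) = 0 by apply/matrixP => i j; rewrite !mxE.
by rewrite oppr0.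
Qed.

Lemma realmx_i_cmx m (M : 'M[R]_m) : realmx ('i%C *: cmx M) = block_mx 0 (- M) M 0.
Proof.
rewrite /realmx; have -> : Remx ('i%C *: cmx M) = 0.
  by apply/matrixP => i j; rewrite !mxE /=; ring.
by have -> : Immx ('i%C *: cmx M) = M by apply/matrixP => i j; rewrite !mxE /=; ring.
Qed.

Lemma realcv_lshift m (v : 'cV[C]_m) j : realcv v (lshift m j) 0 = complex.Re (v j 0).
Proof. by rewrite col_mxEu mxE. Qed.

Lemma realcv_rshift m (v : 'cV[C]_m) j : realcv v (rshift m j) 0 = complex.Im (v j 0).
Proof. by rewrite col_mxEd mxE. Qed.

Lemma realcv_cvg_cvec m (x : nat -> 'cV[C]_m) (l : 'cV[C]_m) :
  entrywise_cvg0 (fun k => realcv (x k) - realcv l) -> cvg_cvec x l.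
Proof.
move=> x0 j; split; rewrite -subr_cvg0.
- have entry k : (realcv (x k) - realcv l) (lshift m j) 0 =
                  complex.Re (x k j 0) - complex.Re (l j 0).
    by rewrite mxE realcv_lshift mxE realcv_lshift.
  by rewrite -(eq_cvg _ _ entry); exact: x0.
- have entry k : (realcv (x k) - realcv l) (rshift m j) 0 =
                  complex.Im (x k j 0) - complex.Im (l j 0).
    by rewrite mxE realcv_rshift mxE realcv_rshift.
  by rewrite -(eq_cvg _ _ entry); exact: x0.
Qed.

End Realification.

Theorem theorem2 (R : realType) (n : nat) (W T : 'M[R]_n) (b : 'cV[R[i]]_n)
  (alpha omega : R)
  (hW : sym_posdef W) (hT : sym_possemidef T)
  (hA : (cmx W + 'i%C *: cmx T) \in unitmx)
  (halpha : 0 < alpha) (homega0 : 0 <= omega) (homega2 : omega < 2)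
  (x xh : nat -> 'cV[R[i]]_n)
  (hhalf : forall k : nat,
      ((alpha%:C)%C%:M + cmx W) *m xh k = ((alpha%:C)%C%:M - 'i%C *: cmx T) *m x k + b)
  (hfull : forall k : nat,
      ((alpha%:C)%C%:M + 'i%C *: cmx T) *m x k.+1 =
        ('i%C *: cmx T - (((1 - omega) * alpha)%:C)%C%:M) *m x k
        + (((2 - omega) * alpha)%:C)%C *: xh k) :
  exists xs : 'cV[R[i]]_n,
    [/\ (cmx W + 'i%C *: cmx T) *m xs = b,
        (forall y : 'cV[R[i]]_n, (cmx W + 'i%C *: cmx T) *m y = b -> y = xs)
      & cvg_cvec x xs].
Proof.
set A := cmx W + 'i%C *: cmx T.
have sol : A *m (invmx A *m b) = b by rewrite mulKVmx.
exists (invmx A *m b); split => //; first by move=> y <-; rewrite mulKmx.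
have posW : sym_posdef (realmx (cmx W)).
  by rewrite realmx_cmx; exact: sym_posdef_block_diag.
have skewK : (realmx ('i%C *: cmx T))^T = - realmx ('i%C *: cmx T).
  by rewrite realmx_i_cmx; exact: skew_block_mx hT.1.
have solR : (realmx (cmx W) + realmx ('i%C *: cmx T)) *m realcv (invmx A *m b) = realcv b.
  by rewrite -realmxD -realcv_mul sol.
apply: realcv_cvg_cvec.
apply: (gadi_cvg posW skewK halpha homega0 homega2 solR (xh := fun k => realcv (xh k))) => k.
  by rewrite -realmx_scalar -realmxD -realmxB -!realcv_mul -realcvD hhalf.
rewrite -realmx_scalar -realmxD -realmx_scalar -realmxB -!realcv_mul.
by rewrite -realcvZ -realcvD hfull.
Qed.
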